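(* Let $R>0$, $t\neq 0$, $c=\frac{1-t^2}{1+t^2}$, $s=\frac{2t}{1+t^2}$, and set $k=0$. Consider the trisector $$T=\{(x,y,z)\in\mathbb{R}^3:\ y^2-(xs-yc)^2+2z-1=0,\ \bigl(x^2+R^2\bigr)^2-4R^2(x^2+y^2)=0\}.$$ Then this degree-eight trisector is reducible and splits into two algebraic space curves of degree four. These two quartic components intersect in exactly two real affine points, $$\Bigl(R,0,\tfrac{1+R^2s^2}{2}\Bigr)\quad\text{and}\quad\Bigl(-R,0,\tfrac{1+R^2s^2}{2}\Bigr),$$ and each of these two points is an ordinary real node of the trisector.
   Context: This is the trisector at parameter value $k=0$ of the $x$-axis, the line through $(0,0,1)$ with direction $(c,s,0)$, and the circle of radius $R$ centered at $(0,0,k)$ in the plane $z=k$ (with line–circle bisector $(x^2-2kz+R^2+k^2)^2-4R^2(x^2+y^2)=0$). An ordinary real node is a point where the curve is locally the union of two smooth branches with distinct tangent lines. *)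

From Stdlib Require Import Reals.
From Coquelicot Require Import Coquelicot.
Open Scope R_scope.

Definition pt := (R * R * R)%type.

Definition cpar (t : R) : R := (1 - t ^ 2) / (1 + t ^ 2).
Definition spar (t : R) : R := 2 * t / (1 + t ^ 2).

Definition trisector (Rad t : R) (P : pt) : Prop :=
  let '(x, y, z) := P in
  y ^ 2 - (x * spar t - y * cpar t) ^ 2 + 2 * z - 1 = 0 /\
  (x ^ 2 + Rad ^ 2) ^ 2 - 4 * Rad ^ 2 * (x ^ 2 + y ^ 2) = 0.

(* An algebraic space curve of degree four given as the graph over the
   x-axis of a polynomial map x |-> (p(x), q(x)) with max(deg p, deg q) = 4
   (a proper polynomial parametrization; a generic plane meets it in 4 points). *)
Definition quartic_graph_curve (C : pt -> Prop) : Prop :=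
  exists a b : nat -> R,
    (a 4%nat <> 0 \/ b 4%nat <> 0) /\
    forall x y z, C (x, y, z) <->
      (y = sum_f_R0 (fun i => a i * x ^ i) 4 /\
       z = sum_f_R0 (fun i => b i * x ^ i) 4).

Definition smooth_fun (f : R -> R) : Prop := forall (n : nat) (u : R), ex_derive_n f n u.

Definition curve_pt (g1 g2 g3 : R -> R) (u : R) : pt := (g1 u, g2 u, g3 u).

Definition smooth_branch (P : pt) (g1 g2 g3 : R -> R) (d : R) : Prop :=
  smooth_fun g1 /\ smooth_fun g2 /\ smooth_fun g3 /\
  curve_pt g1 g2 g3 0 = P /\
  (forall u, -d < u < d ->
     (Derive g1 u, Derive g2 u, Derive g3 u) <> (0, 0, 0)) /\
  (forall u v, -d < u < d -> -d < v < d ->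
     curve_pt g1 g2 g3 u = curve_pt g1 g2 g3 v -> u = v).

Definition not_parallel (v w : pt) : Prop :=
  let '(v1, v2, v3) := v in
  let '(w1, w2, w3) := w in
  (v2 * w3 - v3 * w2, v3 * w1 - v1 * w3, v1 * w2 - v2 * w1) <> (0, 0, 0).

Definition dist2 (P Q : pt) : R :=
  let '(p1, p2, p3) := P in
  let '(q1, q2, q3) := Q in
  (p1 - q1) ^ 2 + (p2 - q2) ^ 2 + (p3 - q3) ^ 2.

Definition ordinary_real_node (S : pt -> Prop) (P : pt) : Prop :=
  exists (eps d : R) (f1 f2 f3 g1 g2 g3 : R -> R),
    0 < eps /\ 0 < d /\
    smooth_branch P f1 f2 f3 d /\ smooth_branch P g1 g2 g3 d /\
    not_parallel (Derive f1 0, Derive f2 0, Derive f3 0)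
                 (Derive g1 0, Derive g2 0, Derive g3 0) /\
    forall Q, dist2 Q P < eps ^ 2 ->
      (S Q <-> ((exists u, -d < u < d /\ Q = curve_pt f1 f2 f3 u) \/
                (exists u, -d < u < d /\ Q = curve_pt g1 g2 g3 u))).

(* Since (x^2 + R^2)^2 - 4 R^2 (x^2 + y^2) = (x^2 - R^2)^2 - (2 R y)^2, the
   circle-line bisector is the union of the two parabolic cylinders
   y = +-(x^2 - R^2)/(2R), while the line-line bisector solves for z.  Hence the
   trisector is the union of two graphs x |-> (y(x), z(x)) of polynomial maps,
   of degree 4 because z contains y^2.  The two y's agree exactly at x = +-R,
   where their slopes +-x/R differ; since each graph, parametrized by x, is a
   smooth branch, each meeting point is an ordinary node. *)
From Stdlib Require Import Reals Lra Psatz.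
From Coquelicot Require Import Coquelicot.
Open Scope R_scope.

Lemma smooth_fun_ext (f g : R -> R) :
  (forall x, f x = g x) -> smooth_fun f -> smooth_fun g.
Proof. intros Hfg Hf n u. exact (ex_derive_n_ext f g n u Hfg (Hf n u)). Qed.

Lemma smooth_fun_plus (f g : R -> R) :
  smooth_fun f -> smooth_fun g -> smooth_fun (fun x => f x + g x).
Proof.
  intros Hf Hg n x.
  apply ex_derive_n_plus; apply filter_forall; intros y k _; [apply Hf | apply Hg].
Qed.

Lemma smooth_poly (a : nat -> R) (n : nat) :
  smooth_fun (fun x => sum_f_R0 (fun i => a i * x ^ i) n).
Proof.
  induction n as [|n IHn]; intros k u.
  - apply ex_derive_n_scal_l, ex_derive_n_pow.
  - apply (smooth_fun_plus _ (fun x => a (S n) * x ^ S n) IHn).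
    intros m v; apply ex_derive_n_scal_l, ex_derive_n_pow.
Qed.

Lemma smooth_shift (f : R -> R) (x0 : R) :
  smooth_fun f -> smooth_fun (fun u => f (x0 + u)).
Proof.
  intros Hf n u.
  apply (ex_derive_n_ext (fun y => f (y + x0))); [intros y; now rewrite Rplus_comm|].
  apply ex_derive_n_comp_trans, Hf.
Qed.

Lemma smooth_translation (x0 : R) : smooth_fun (fun u => x0 + u).
Proof.
  apply (smooth_shift (fun x => x)).
  intros n u; apply (ex_derive_n_ext (fun x => x ^ 1)); [intros; ring|].
  apply ex_derive_n_pow.
Qed.

Lemma Derive_translation (x0 u : R) : Derive (fun v => x0 + v) u = 1.
Proof. apply is_derive_unique; auto_derive; auto; ring. Qed.

Lemma Derive_shift0 (f : R -> R) (x0 : R) :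
  smooth_fun f -> Derive (fun u => f (x0 + u)) 0 = Derive f x0.
Proof.
  intros Hf.
  rewrite Derive_comp, Derive_translation, Rplus_0_r; [ring | |].
  - exact (Hf 1%nat (x0 + 0)).
  - exact (smooth_translation x0 1%nat 0).
Qed.

Definition graph (p q : R -> R) (P : pt) : Prop :=
  let '(x, y, z) := P in y = p x /\ z = q x.

Lemma quartic_graph_curve_graph (a b : nat -> R) (p q : R -> R) :
  a 4%nat <> 0 \/ b 4%nat <> 0 ->
  (forall x, p x = sum_f_R0 (fun i => a i * x ^ i) 4) ->
  (forall x, q x = sum_f_R0 (fun i => b i * x ^ i) 4) ->
  quartic_graph_curve (graph p q).
Proof.
  intros Hdeg Hp Hq. exists a, b. split; [exact Hdeg|].
  intros x y z; simpl. now rewrite Hp, Hq.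
Qed.

Lemma graph_smooth_branch (p q : R -> R) (x0 d : R) :
  smooth_fun p -> smooth_fun q ->
  smooth_branch (x0, p x0, q x0)
    (fun u => x0 + u) (fun u => p (x0 + u)) (fun u => q (x0 + u)) d.
Proof.
  intros Hp Hq.
  split; [apply smooth_translation|].
  split; [now apply smooth_shift|].
  split; [now apply smooth_shift|].
  split; [unfold curve_pt; now rewrite Rplus_0_r|].
  split.
  - intros u _ H. rewrite Derive_translation in H. injection H; intros; lra.
  - intros u v _ _ H. injection H; intros; lra.
Qed.

Lemma graph_local_param (p q : R -> R) (x0 d x y z : R) :
  -d < x - x0 < d ->
  graph p q (x, y, z) <->
  exists u, -d < u < d /\
    (x, y, z) = curve_pt (fun u => x0 + u) (fun u => p (x0 + u)) (fun u => q (x0 + u)) u.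
Proof.
  intros Hx. unfold curve_pt; simpl. split.
  - intros [-> ->]. exists (x - x0). split; [exact Hx|].
    now replace (x0 + (x - x0)) with x by ring.
  - intros [u [_ H]]. injection H; intros -> -> ->. now split.
Qed.

Lemma not_parallel_slopes (a b c d : R) : a <> b -> not_parallel (1, a, c) (1, b, d).
Proof. intros Hab H; injection H; intros; lra. Qed.

Lemma graph_union_node (S : pt -> Prop) (p1 q1 p2 q2 : R -> R) (x0 : R) :
  smooth_fun p1 -> smooth_fun q1 -> smooth_fun p2 -> smooth_fun q2 ->
  p1 x0 = p2 x0 -> q1 x0 = q2 x0 -> Derive p1 x0 <> Derive p2 x0 ->
  (forall P, S P <-> graph p1 q1 P \/ graph p2 q2 P) ->
  ordinary_real_node S (x0, p1 x0, q1 x0).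
Proof.
  intros Hp1 Hq1 Hp2 Hq2 Hp12 Hq12 Hslope HS.
  exists 1, 1, (fun u => x0 + u), (fun u => p1 (x0 + u)), (fun u => q1 (x0 + u)),
    (fun u => x0 + u), (fun u => p2 (x0 + u)), (fun u => q2 (x0 + u)).
  split; [lra|]. split; [lra|].
  split; [now apply graph_smooth_branch|].
  split; [rewrite Hp12, Hq12; now apply graph_smooth_branch|].
  split.
  - rewrite !Derive_translation, !Derive_shift0 by assumption.
    now apply not_parallel_slopes.
  - intros [[x y] z] Hd. unfold dist2 in Hd.
    assert (Hx : -1 < x - x0 < 1).
    { assert (0 <= (y - p1 x0) ^ 2) by apply pow2_ge_0.
      assert (0 <= (z - q1 x0) ^ 2) by apply pow2_ge_0.
      assert ((x - x0) ^ 2 < 1) by lra.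
      split; nra. }
    rewrite HS, !(graph_local_param _ _ x0 1) by exact Hx. reflexivity.
Qed.

Definition branch_y (Rad s x : R) : R := s * (x ^ 2 - Rad ^ 2) / (2 * Rad).

Definition bisector_z (t x y : R) : R := (1 - y ^ 2 + (x * spar t - y * cpar t) ^ 2) / 2.

Definition branch_z (Rad t s x : R) : R := bisector_z t x (branch_y Rad s x).

Definition branch (Rad t s : R) : pt -> Prop := graph (branch_y Rad s) (branch_z Rad t s).

Lemma circle_bisector_split (Rad x y : R) : 0 < Rad ->
  (x ^ 2 + Rad ^ 2) ^ 2 - 4 * Rad ^ 2 * (x ^ 2 + y ^ 2) = 0 <->
  y = branch_y Rad 1 x \/ y = branch_y Rad (-1) x.
Proof.
  intros HR. unfold branch_y.
  assert (Hfactor : (x ^ 2 + Rad ^ 2) ^ 2 - 4 * Rad ^ 2 * (x ^ 2 + y ^ 2)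
                    = - (2 * Rad * y - (x ^ 2 - Rad ^ 2)) * (2 * Rad * y + (x ^ 2 - Rad ^ 2)))
    by ring.
  rewrite Hfactor. split.
  - intros H. apply Rmult_integral in H as [H | H]; [left | right];
      field_simplify_eq; lra.
  - intros [-> | ->]; field; lra.
Qed.

Lemma line_bisector_solve_z (t x y z : R) :
  y ^ 2 - (x * spar t - y * cpar t) ^ 2 + 2 * z - 1 = 0 <-> z = bisector_z t x y.
Proof. unfold bisector_z. split; intros; lra. Qed.

Lemma trisector_branches (Rad t : R) (P : pt) : 0 < Rad ->
  trisector Rad t P <-> branch Rad t 1 P \/ branch Rad t (-1) P.
Proof.
  intros HR. destruct P as [[x y] z].
  unfold trisector, branch, graph, branch_z.
  rewrite line_bisector_solve_z, circle_bisector_split by exact HR.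
  split; [intros [Hz [-> | ->]] | intros [[-> ->] | [-> ->]]]; auto.
Qed.

Lemma spar_neq0 (t : R) : t <> 0 -> spar t <> 0.
Proof.
  intros Ht. unfold spar. assert (0 < 1 + t ^ 2) by nra.
  apply Rmult_integral_contrapositive; split; [lra | apply Rinv_neq_0_compat; lra].
Qed.

Definition branch_y_coef (Rad s : R) (i : nat) : R :=
  match i with
  | 0%nat => - (s * Rad / 2)
  | 2%nat => s / (2 * Rad)
  | _ => 0
  end.

(* Expanding [bisector_z] along y = e (x^2 - Rad^2), with cpar^2 + spar^2 = 1. *)
Definition branch_z_coef (Rad t s : R) (i : nat) : R :=
  let e := s / (2 * Rad) in
  match i with
  | 0%nat => (1 - (e * spar t) ^ 2 * Rad ^ 4) / 2
  | 1%nat => e * cpar t * spar t * Rad ^ 2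
  | 2%nat => spar t ^ 2 / 2 + (e * spar t * Rad) ^ 2
  | 3%nat => - (e * cpar t * spar t)
  | 4%nat => - (e * spar t) ^ 2 / 2
  | _ => 0
  end.

Lemma branch_y_poly (Rad s x : R) : 0 < Rad ->
  branch_y Rad s x = sum_f_R0 (fun i => branch_y_coef Rad s i * x ^ i) 4.
Proof. intros HR. unfold branch_y; simpl. field. lra. Qed.

Lemma branch_z_poly (Rad t s x : R) : 0 < Rad ->
  branch_z Rad t s x = sum_f_R0 (fun i => branch_z_coef Rad t s i * x ^ i) 4.
Proof.
  intros HR. assert (0 < 1 + t ^ 2) by nra.
  unfold branch_z, bisector_z, branch_y, branch_z_coef, cpar, spar; simpl sum_f_R0.
  field; lra.
Qed.

Lemma branch_y_smooth (Rad s : R) : 0 < Rad -> smooth_fun (branch_y Rad s).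
Proof.
  intros HR. apply (smooth_fun_ext (fun x => sum_f_R0 (fun i => branch_y_coef Rad s i * x ^ i) 4)).
  - intros x; symmetry; now apply branch_y_poly.
  - apply smooth_poly.
Qed.

Lemma branch_z_smooth (Rad t s : R) : 0 < Rad -> smooth_fun (branch_z Rad t s).
Proof.
  intros HR. apply (smooth_fun_ext (fun x => sum_f_R0 (fun i => branch_z_coef Rad t s i * x ^ i) 4)).
  - intros x; symmetry; now apply branch_z_poly.
  - apply smooth_poly.
Qed.

Lemma quartic_branch (Rad t s : R) : 0 < Rad -> t <> 0 -> s <> 0 ->
  quartic_graph_curve (branch Rad t s).
Proof.
  intros HR Ht Hs.
  apply (quartic_graph_curve_graph (branch_y_coef Rad s) (branch_z_coef Rad t s)).
  - right. simpl. assert (s / (2 * Rad) * spar t <> 0).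
    { apply Rmult_integral_contrapositive; split; [|now apply spar_neq0].
      apply Rmult_integral_contrapositive; split; [exact Hs|].
      apply Rinv_neq_0_compat; lra. }
    assert (0 < (s / (2 * Rad) * spar t) ^ 2) by (apply pow2_gt_0; assumption).
    lra.
  - intros x; now apply branch_y_poly.
  - intros x; now apply branch_z_poly.
Qed.

Lemma Derive_branch_y (Rad s x : R) : 0 < Rad -> Derive (branch_y Rad s) x = s * x / Rad.
Proof. intros HR. apply is_derive_unique. unfold branch_y. auto_derive; auto. field. lra. Qed.

Lemma branch_y_eq_iff (Rad x : R) : 0 < Rad ->
  branch_y Rad 1 x = branch_y Rad (-1) x <-> x = Rad \/ x = - Rad.
Proof.
  intros HR. unfold branch_y. split.
  - intros H. assert (Hroot : (x - Rad) * (x + Rad) = 0).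
    { replace ((x - Rad) * (x + Rad))
        with ((1 * (x ^ 2 - Rad ^ 2) / (2 * Rad) - -1 * (x ^ 2 - Rad ^ 2) / (2 * Rad)) * Rad)
        by (field; lra).
      rewrite H; ring. }
    apply Rmult_integral in Hroot as [H1 | H1]; [left | right]; lra.
  - intros [-> | ->]; field; lra.
Qed.

Lemma branch_y_at_node (Rad s x : R) : 0 < Rad -> x ^ 2 = Rad ^ 2 -> branch_y Rad s x = 0.
Proof. intros HR Hx. unfold branch_y. rewrite Hx. field. lra. Qed.

Lemma branch_z_at_node (Rad t s x : R) : 0 < Rad -> x ^ 2 = Rad ^ 2 ->
  branch_z Rad t s x = (1 + Rad ^ 2 * spar t ^ 2) / 2.
Proof.
  intros HR Hx. unfold branch_z, bisector_z. rewrite branch_y_at_node by assumption.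
  rewrite <- Hx. field.
Qed.

Lemma branches_meet (Rad t : R) (P : pt) : 0 < Rad ->
  branch Rad t 1 P /\ branch Rad t (-1) P <->
  P = (Rad, 0, (1 + Rad ^ 2 * spar t ^ 2) / 2) \/
  P = (- Rad, 0, (1 + Rad ^ 2 * spar t ^ 2) / 2).
Proof.
  intros HR. destruct P as [[x y] z]. unfold branch, graph. split.
  - intros [[Hy1 Hz1] [Hy2 _]].
    assert (Hx : x = Rad \/ x = - Rad) by (apply branch_y_eq_iff; congruence).
    assert (Hx2 : x ^ 2 = Rad ^ 2) by (destruct Hx as [-> | ->]; ring).
    rewrite branch_y_at_node in Hy1 by assumption.
    rewrite branch_z_at_node in Hz1 by assumption.
    subst y z. destruct Hx as [-> | ->]; [left | right]; reflexivity.
  - intros Hnode.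
    assert (Hx2 : x ^ 2 = Rad ^ 2) by (destruct Hnode as [H | H]; injection H; intros; subst; ring).
    rewrite !branch_y_at_node, !branch_z_at_node by assumption.
    destruct Hnode as [H | H]; injection H; intros -> -> _; auto.
Qed.

Lemma trisector_node (Rad t x0 : R) : 0 < Rad -> x0 ^ 2 = Rad ^ 2 ->
  ordinary_real_node (trisector Rad t) (x0, 0, (1 + Rad ^ 2 * spar t ^ 2) / 2).
Proof.
  intros HR Hx0.
  rewrite <- (branch_y_at_node Rad 1 x0), <- (branch_z_at_node Rad t 1 x0) by assumption.
  apply (graph_union_node _ _ _ (branch_y Rad (-1)) (branch_z Rad t (-1))).
  - now apply branch_y_smooth.
  - now apply branch_z_smooth.
  - now apply branch_y_smooth.
  - now apply branch_z_smooth.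
  - now rewrite !branch_y_at_node.
  - now rewrite !branch_z_at_node.
  - rewrite !Derive_branch_y by exact HR.
    assert (Hx0nz : x0 <> 0) by (intros ->; nra).
    intros Hslope. apply Rmult_eq_reg_r in Hslope; [lra|].
    apply Rinv_neq_0_compat; lra.
  - intros P. now apply trisector_branches.
Qed.

Theorem theorem7 (Rad t : R) :
  0 < Rad -> t <> 0 ->
  (exists C1 C2 : pt -> Prop,
     quartic_graph_curve C1 /\ quartic_graph_curve C2 /\
     (forall P, trisector Rad t P <-> (C1 P \/ C2 P)) /\
     (forall P, (C1 P /\ C2 P) <->
        (P = (Rad, 0, (1 + Rad ^ 2 * spar t ^ 2) / 2) \/
         P = (- Rad, 0, (1 + Rad ^ 2 * spar t ^ 2) / 2)))) /\
  ordinary_real_node (trisector Rad t) (Rad, 0, (1 + Rad ^ 2 * spar t ^ 2) / 2) /\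
  ordinary_real_node (trisector Rad t) (- Rad, 0, (1 + Rad ^ 2 * spar t ^ 2) / 2).
Proof.
  intros HR Ht.
  split; [|split; apply trisector_node; auto; ring].
  exists (branch Rad t 1), (branch Rad t (-1)).
  split; [apply quartic_branch; auto; lra|].
  split; [apply quartic_branch; auto; lra|].
  split; intros P; [now apply trisector_branches | now apply branches_meet].
Qed.
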